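(* For $t>1$ let $a=\frac{t\theta}{\sqrt{t^2-1}}$, $b=\frac{\theta}{\sqrt{t^2-1}}$, $e_1=(\cos a\cos\phi,\cos a\sin\phi,\sin a\cos\phi,\sin a\sin\phi)$ and $Y_t:\mathbb{R}^2\to\mathbb{R}^6_2$, $Y_t(\theta,\phi)=(e_1,\cos b,\sin b)$. Then $y_t=[Y_t]:\mathbb{R}^2\to Q^4_1$ is a conformal spacelike Willmore immersion (with respect to $z=\theta+i\phi$, for which $Y_t$ is the canonical lift) which is not S-Willmore; its conformal Hopf differential is $\kappa=-\frac{it}{2\sqrt2\sqrt{t^2-1}}(L-R)$. If $t=p/q$ with $p>q\geq1$ coprime integers, $y_t$ descends to a spacelike Willmore torus $\mathbb{R}^2/\Lambda\to Q^4_1$ with $\Lambda$ generated by $(2\pi q\sqrt{t^2-1},0)$ and $(0,2\pi)$, and its Willmore functional is $W(y_t)=\frac{p^2}{\sqrt{p^2-q^2}}\pi^2$; the minimum of these values over all such $p,q$ is $\frac{4}{\sqrt3}\pi^2$.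
   Context: $\mathbb{R}^6_2$ is $\mathbb{R}^6$ with inner product $\langle x,y\rangle=\sum_{i=1}^4x_iy_i-x_5y_5-x_6y_6$ (extended complex-bilinearly), with a fixed orientation; $C^5$ its light cone; $Q^4_1=\{[x]\in\mathbb{R}P^5:x\in C^5\setminus\{0\}\}$. A conformal spacelike immersion $y$ into $Q^4_1$ satisfies, for any local lift $Y$ and complex coordinate $z=u+iv$, $\langle Y_z,Y_z\rangle=0$, $\langle Y_z,Y_{\bar z}\rangle>0$ ($Y_z=\frac12(Y_u-iY_v)$); the canonical lift has $\langle Y_z,Y_{\bar z}\rangle=\frac12$. $V=\mathrm{Span}\{Y,Y_u,Y_v,Y_{z\bar z}\}$, $V^\perp$ its orthogonal complement; $N\in\Gamma(V)$ with $\langle N,Y_z\rangle=\langle N,N\rangle=0$, $\langle N,Y\rangle=-1$; $L,R\in\Gamma(V^\perp)$ real null with $\langle L,R\rangle=-1$ and $\{Y,Y_u,Y_v,N,R,L\}$ positively oriented. $Y_{zz}=-\frac s2Y+\kappa$ defines the conformal Hopf differential $\kappa$; $D$ is the normal connection on $V^\perp$. The Willmore functional is $W(y)=\frac i2\int_M\langle\kappa,\bar\kappa\rangle dz\wedge d\bar z$; $y$ is Willmore if it is critical for $W$ under all variations, equivalently $D_{\bar z}D_{\bar z}\kappa+\frac{\bar s}2\kappa=0$; S-Willmore if additionally $D_{\bar z}\kappa$ is parallel to $\kappa$. *)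

From Stdlib Require Import Reals Lra ClassicalEpsilon List.
Open Scope R_scope.

(* A vector of R^6 is a function nat -> R; only components 0..5 matter. *)
Definition vec := nat -> R.
Definition VF := R -> R -> vec.
Definition CR := (R * R)%type.           (* complex number (re, im) *)
Definition cvec := (vec * vec)%type.     (* complex vector (re, im) *)
Definition CVF := R -> R -> cvec.

Definition ip62 (x y : vec) : R :=
  x 0%nat * y 0%nat + x 1%nat * y 1%nat + x 2%nat * y 2%nat + x 3%nat * y 3%nat
  - x 4%nat * y 4%nat - x 5%nat * y 5%nat.

Definition veq (x y : vec) : Prop := forall i, (i < 6)%nat -> x i = y i.
Definition vzero : vec := fun _ => 0.
Definition vadd (x y : vec) : vec := fun i => x i + y i.
Definition vsub (x y : vec) : vec := fun i => x i - y i.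
Definition vscal (a : R) (x : vec) : vec := fun i => a * x i.

Definition cmul (a b : CR) : CR :=
  (fst a * fst b - snd a * snd b, fst a * snd b + snd a * fst b).
Definition cconj (a : CR) : CR := (fst a, - snd a).

(* complex-bilinear extension of the inner product *)
Definition cip (x y : cvec) : CR :=
  (ip62 (fst x) (fst y) - ip62 (snd x) (snd y),
   ip62 (fst x) (snd y) + ip62 (snd x) (fst y)).
Definition cvconj (x : cvec) : cvec := (fst x, fun i => - snd x i).
Definition cvscal (a : CR) (x : cvec) : cvec :=
  (fun i => fst a * fst x i - snd a * snd x i,
   fun i => fst a * snd x i + snd a * fst x i).
Definition cvadd (x y : cvec) : cvec := (vadd (fst x) (fst y), vadd (snd x) (snd y)).
Definition cvsub (x y : cvec) : cvec := (vsub (fst x) (fst y), vsub (snd x) (snd y)).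
Definition cvzero : cvec := (vzero, vzero).
Definition cveq (x y : cvec) : Prop := veq (fst x) (fst y) /\ veq (snd x) (snd y).
Definition of_real (x : vec) : cvec := (x, vzero).
Definition RF (F : VF) : CVF := fun u v => of_real (F u v).

(* the derivative of f at x (meaningful when f is differentiable at x) *)
Definition deriv1 (f : R -> R) (x : R) : R :=
  epsilon (inhabits 0) (fun l => derivable_pt_lim f x l).
Definition pu (F : VF) : VF := fun u v i => deriv1 (fun s => F s v i) u.
Definition pv (F : VF) : VF := fun u v i => deriv1 (fun s => F u s i) v.
Fixpoint iterd (ds : list bool) (F : VF) : VF :=
  match ds with
  | nil => F
  | cons d ds' => (if d then pu else pv) (iterd ds' F)
  end.
Definition smoothVF (F : VF) : Prop :=
  forall ds u v i, (i < 6)%nat ->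
    (exists l, derivable_pt_lim (fun s => iterd ds F s v i) u l) /\
    (exists l, derivable_pt_lim (fun s => iterd ds F u s i) v l).
Definition smoothCVF (F : CVF) : Prop :=
  smoothVF (fun u v => fst (F u v)) /\ smoothVF (fun u v => snd (F u v)).

(* d/dz = 1/2 (d/du - i d/dv),  d/dzbar = 1/2 (d/du + i d/dv),  z = u + i v *)
Definition dz (F : CVF) : CVF := fun u v =>
  let a := fun u v => fst (F u v) in let b := fun u v => snd (F u v) in
  (vscal (1/2) (vadd (pu a u v) (pv b u v)), vscal (1/2) (vsub (pu b u v) (pv a u v))).
Definition dzb (F : CVF) : CVF := fun u v =>
  let a := fun u v => fst (F u v) in let b := fun u v => snd (F u v) in
  (vscal (1/2) (vsub (pu a u v) (pv b u v)), vscal (1/2) (vadd (pu b u v) (pv a u v))).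

Definition conf_spacelike_lift (Y : VF) : Prop :=
  smoothVF Y /\
  forall u v,
    (exists i, (i < 6)%nat /\ Y u v i <> 0) /\
    ip62 (Y u v) (Y u v) = 0 /\
    cip (dz (RF Y) u v) (dz (RF Y) u v) = (0, 0) /\
    snd (cip (dz (RF Y) u v) (dzb (RF Y) u v)) = 0 /\
    0 < fst (cip (dz (RF Y) u v) (dzb (RF Y) u v)).

Definition canonical_lift (Y : VF) : Prop :=
  conf_spacelike_lift Y /\
  forall u v, cip (dz (RF Y) u v) (dzb (RF Y) u v) = (1/2, 0).

(* V = Span{Y, Y_u, Y_v, Y_{z zbar}} (complexified) at (u,v) *)
Definition inV (Y : VF) (u v : R) (w : cvec) : Prop :=
  exists a b c d : CR,
    cveq w (cvadd (cvadd (cvscal a (of_real (Y u v))) (cvscal b (of_real (pu Y u v))))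
                  (cvadd (cvscal c (of_real (pv Y u v))) (cvscal d (dzb (dz (RF Y)) u v)))).
Definition inVperp (Y : VF) (u v : R) (w : cvec) : Prop :=
  cip w (of_real (Y u v)) = (0, 0) /\
  cip w (of_real (pu Y u v)) = (0, 0) /\
  cip w (of_real (pv Y u v)) = (0, 0) /\
  cip w (dzb (dz (RF Y)) u v) = (0, 0).

Definition hopf (Y : VF) (kappa : CVF) (s : R -> R -> CR) : Prop :=
  canonical_lift Y /\ smoothCVF kappa /\
  forall u v, inVperp Y u v (kappa u v) /\
    cveq (dz (dz (RF Y)) u v)
         (cvadd (cvscal (cmul (-1/2, 0) (s u v)) (of_real (Y u v))) (kappa u v)).

(* eta = D_zbar xi : the V^perp-component of xi_zbar, for xi a section of V^perp *)
Definition Dzb (Y : VF) (xi eta : CVF) : Prop :=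
  forall u v, inVperp Y u v (eta u v) /\ inV Y u v (cvsub (dzb xi u v) (eta u v)).

(* Willmore: D_zbar D_zbar kappa + (sbar/2) kappa = 0 *)
Definition Willmore (Y : VF) : Prop :=
  exists kappa s eta1 eta2,
    hopf Y kappa s /\ smoothCVF eta1 /\ Dzb Y kappa eta1 /\ Dzb Y eta1 eta2 /\
    forall u v, cveq (cvadd (eta2 u v) (cvscal (cmul (1/2, 0) (cconj (s u v))) (kappa u v)))
                     cvzero.

Definition SWillmore (Y : VF) : Prop :=
  Willmore Y /\
  exists kappa s eta1,
    hopf Y kappa s /\ Dzb Y kappa eta1 /\
    forall u v, exists alpha beta : CR, (alpha, beta) <> ((0, 0), (0, 0)) /\
      cveq (cvadd (cvscal alpha (eta1 u v)) (cvscal beta (kappa u v))) cvzero.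

Fixpoint sumR (n : nat) (f : nat -> R) : R :=
  match n with O => 0 | S m => sumR m f + f m end.
Fixpoint detn (n : nat) (M : nat -> nat -> R) : R :=
  match n with
  | O => 1
  | S m => sumR (S m) (fun j => (-1) ^ j * M O j *
             detn m (fun i k => M (S i) (if Nat.ltb k j then k else S k)))
  end.
Definition det6 (x0 x1 x2 x3 x4 x5 : vec) : R :=
  detn 6 (fun i j => match i with
                     | 0 => x0 j | 1 => x1 j | 2 => x2 j | 3 => x3 j | 4 => x4 j
                     | _ => x5 j end).

Definition frame (Y : VF) (N L Rr : VF) : Prop :=
  forall u v,
    inV Y u v (of_real (N u v)) /\
    cip (of_real (N u v)) (dz (RF Y) u v) = (0, 0) /\
    ip62 (N u v) (N u v) = 0 /\ ip62 (N u v) (Y u v) = -1 /\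
    inVperp Y u v (of_real (L u v)) /\ inVperp Y u v (of_real (Rr u v)) /\
    ip62 (L u v) (L u v) = 0 /\ ip62 (Rr u v) (Rr u v) = 0 /\
    ip62 (L u v) (Rr u v) = -1 /\
    0 < det6 (Y u v) (pu Y u v) (pv Y u v) (N u v) (Rr u v) (L u v).

Definition is_RInt (f : R -> R) (a b l : R) : Prop :=
  exists pr : Riemann_integrable f a b, RiemannInt pr = l.
Definition is_RInt2 (F : R -> R -> R) (a b c d l : R) : Prop :=
  exists g : R -> R,
    (forall x, a <= x <= b -> is_RInt (fun y => F x y) c d (g x)) /\ is_RInt g a b l.

Definition periodic (Y : VF) (T1 T2 : R) : Prop :=
  forall u v, veq (Y (u + T1) v) (Y u v) /\ veq (Y u (v + T2)) (Y u v).

(* W(y) = (i/2) \int <kappa, kappabar> dz /\ dzbar = \int <kappa,kappabar> du dv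
   over the fundamental domain [0,T1] x [0,T2] *)
Definition Wval (Y : VF) (T1 T2 w : R) : Prop :=
  exists kappa s, hopf Y kappa s /\
    is_RInt2 (fun u v => fst (cip (kappa u v) (cvconj (kappa u v)))) 0 T1 0 T2 w.

Definition Yt (t : R) : VF := fun th ph i =>
  let a := t * th / sqrt (t ^ 2 - 1) in
  let b := th / sqrt (t ^ 2 - 1) in
  match i with
  | 0 => cos a * cos ph
  | 1 => cos a * sin ph
  | 2 => sin a * cos ph
  | 3 => sin a * sin ph
  | 4 => cos b
  | _ => sin b
  end.

Definition admissible (p q : nat) : Prop :=
  (1 <= q)%nat /\ (q < p)%nat /\ Nat.gcd p q = 1%nat.

From Stdlib Require Import Reals Lra Lia ClassicalEpsilon FunctionalExtensionality.
Open Scope R_scope.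

(* Write e1..e4 for the orthonormal frame of the Clifford torus in R^4 at the
   point (a, phi) (e1 is the position vector, e2 = d_a e1, e3 = d_phi e1,
   e4 = d_a d_phi e1) and f1, f2 for the frame (cos b, sin b), (-sin b, cos b)
   of the timelike circle.  For constants al, be the vector fields
       efield al be c = ce1 e1 + ce2 e2 + ce3 e3 + ce4 e4 + cf1 f1 + cf2 f2,
   evaluated at a = al u, phi = v, b = be u, form a 6-dimensional space that is
   closed under d_u and d_v (which act on the coefficients c by constant
   matrices), and <efield c, efield d> is a constant bilinear form of c, d.
   Since Y_t = efield (t/S) (1/S) (1,0,0,0,1,0) with S = sqrt(t^2-1), every
   object in the definitions (Y_z, Y_zz, s, kappa, D_zbar kappa, the frame
   N, L, R, the density <kappa, kappabar>) is computed by linear algebra on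
   coefficient vectors.  The only relation among the parameters we need is
   al^2 - be^2 = 1; we build it in through the rational parametrization
   al = (x + 1/x)/2, be = (x - 1/x)/2 of the hyperbola, so that all the
   resulting identities are closed by `field`. *)

Lemma deriv1_eq f x l : derivable_pt_lim f x l -> deriv1 f x = l.
Proof.
  intro H. unfold deriv1.
  pose proof (epsilon_spec (inhabits 0) (fun l => derivable_pt_lim f x l) (ex_intro _ l H)) as H0.
  exact (uniqueness_limite f x _ _ H0 H).
Qed.

Lemma derivable_pt_lim_cos_comp f x l : derivable_pt_lim f x l ->
  derivable_pt_lim (fun s => cos (f s)) x (- sin (f x) * l).
Proof. intro H. apply (derivable_pt_lim_comp f cos); auto. apply derivable_pt_lim_cos. Qed.
Lemma derivable_pt_lim_sin_comp f x l : derivable_pt_lim f x l ->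
  derivable_pt_lim (fun s => sin (f s)) x (cos (f x) * l).
Proof. intro H. apply (derivable_pt_lim_comp f sin); auto. apply derivable_pt_lim_sin. Qed.

Lemma derivable_pt_lim_value f x l l' : derivable_pt_lim f x l' -> l' = l -> derivable_pt_lim f x l.
Proof. intros H ->; exact H. Qed.

Ltac differentiate :=
  lazymatch goal with
  | |- derivable_pt_lim (fun s => s) _ _ => apply derivable_pt_lim_id
  | |- derivable_pt_lim (fun s => @?f s + @?g s) _ _ => apply (derivable_pt_lim_plus f g); differentiate
  | |- derivable_pt_lim (fun s => @?f s - @?g s) _ _ => apply (derivable_pt_lim_minus f g); differentiate
  | |- derivable_pt_lim (fun s => @?f s * @?g s) _ _ => apply (derivable_pt_lim_mult f g); differentiate
  | |- derivable_pt_lim (fun s => - @?f s) _ _ => apply (derivable_pt_lim_opp f); differentiate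
  | |- derivable_pt_lim (fun s => cos (@?f s)) _ _ => apply (derivable_pt_lim_cos_comp f); differentiate
  | |- derivable_pt_lim (fun s => sin (@?f s)) _ _ => apply (derivable_pt_lim_sin_comp f); differentiate
  | |- derivable_pt_lim (fun s => _) _ _ => apply derivable_pt_lim_const
  end.

Ltac fext := apply functional_extensionality; intro.
Ltac destruct6 i := destruct i as [|[|[|[|[|i]]]]].

(* Coefficient vectors with respect to the frame (e1, e2, e3, e4, f1, f2). *)
Record coef := Coef { ce1 : R; ce2 : R; ce3 : R; ce4 : R; cf1 : R; cf2 : R }.

Definition clifford_e1 (a v : R) : vec := fun i => match i with
  | 0 => cos a * cos v | 1 => cos a * sin v | 2 => sin a * cos v | 3 => sin a * sin v
  | _ => 0 end.
Definition clifford_e2 (a v : R) : vec := fun i => match i with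
  | 0 => - sin a * cos v | 1 => - sin a * sin v | 2 => cos a * cos v | 3 => cos a * sin v
  | _ => 0 end.
Definition clifford_e3 (a v : R) : vec := fun i => match i with
  | 0 => - cos a * sin v | 1 => cos a * cos v | 2 => - sin a * sin v | 3 => sin a * cos v
  | _ => 0 end.
Definition clifford_e4 (a v : R) : vec := fun i => match i with
  | 0 => sin a * sin v | 1 => - sin a * cos v | 2 => - cos a * sin v | 3 => cos a * cos v
  | _ => 0 end.
Definition circle_f1 (b : R) : vec := fun i => match i with
  | 0 | 1 | 2 | 3 => 0 | 4 => cos b | _ => sin b end.
Definition circle_f2 (b : R) : vec := fun i => match i with
  | 0 | 1 | 2 | 3 => 0 | 4 => - sin b | _ => cos b end.

Definition efield (al be : R) (c : coef) : VF := fun u v i =>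
  ce1 c * clifford_e1 (al * u) v i + ce2 c * clifford_e2 (al * u) v i
  + ce3 c * clifford_e3 (al * u) v i + ce4 c * clifford_e4 (al * u) v i
  + cf1 c * circle_f1 (be * u) i + cf2 c * circle_f2 (be * u) i.

Definition coef_du (al be : R) (c : coef) : coef :=
  Coef (- al * ce2 c) (al * ce1 c) (- al * ce4 c) (al * ce3 c) (- be * cf2 c) (be * cf1 c).
Definition coef_dv (c : coef) : coef := Coef (- ce3 c) (- ce4 c) (ce1 c) (ce2 c) 0 0.

Lemma efield_du al be c u v i :
  derivable_pt_lim (fun s => efield al be c s v i) u (efield al be (coef_du al be c) u v i).
Proof.
  unfold efield, clifford_e1, clifford_e2, clifford_e3, clifford_e4, circle_f1, circle_f2, coef_du.
  destruct6 i; simpl; eapply derivable_pt_lim_value; try differentiate; ring.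
Qed.
Lemma efield_dv al be c u v i :
  derivable_pt_lim (fun s => efield al be c u s i) v (efield al be (coef_dv c) u v i).
Proof.
  unfold efield, clifford_e1, clifford_e2, clifford_e3, clifford_e4, circle_f1, circle_f2, coef_dv.
  destruct6 i; simpl; eapply derivable_pt_lim_value; try differentiate; ring.
Qed.

Lemma pu_efield al be c : pu (efield al be c) = efield al be (coef_du al be c).
Proof. fext; fext; fext. unfold pu. apply deriv1_eq, efield_du. Qed.
Lemma pv_efield al be c : pv (efield al be c) = efield al be (coef_dv c).
Proof. fext; fext; fext. unfold pv. apply deriv1_eq, efield_dv. Qed.

(* Iterated partial derivatives stay in the family, hence the fields are smooth. *)
Fixpoint coef_iterd (al be : R) (ds : list bool) (c : coef) : coef :=
  match ds with
  | nil => c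
  | cons d ds' => (if d then coef_du al be else coef_dv) (coef_iterd al be ds' c)
  end.
Lemma iterd_efield al be ds c : iterd ds (efield al be c) = efield al be (coef_iterd al be ds c).
Proof.
  induction ds as [|d ds IH]; simpl; auto.
  rewrite IH. destruct d; [apply pu_efield | apply pv_efield].
Qed.
Lemma smooth_efield al be c : smoothVF (efield al be c).
Proof.
  intros ds u v i Hi. rewrite iterd_efield. split; eexists; [apply efield_du | apply efield_dv].
Qed.

Definition cadd (c d : coef) :=
  Coef (ce1 c + ce1 d) (ce2 c + ce2 d) (ce3 c + ce3 d) (ce4 c + ce4 d) (cf1 c + cf1 d) (cf2 c + cf2 d).
Definition csub (c d : coef) :=
  Coef (ce1 c - ce1 d) (ce2 c - ce2 d) (ce3 c - ce3 d) (ce4 c - ce4 d) (cf1 c - cf1 d) (cf2 c - cf2 d).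
Definition cscale (r : R) (c : coef) :=
  Coef (r * ce1 c) (r * ce2 c) (r * ce3 c) (r * ce4 c) (r * cf1 c) (r * cf2 c).
Definition czero := Coef 0 0 0 0 0 0.
Definition coef_ip (c d : coef) :=
  ce1 c * ce1 d + ce2 c * ce2 d + ce3 c * ce3 d + ce4 c * ce4 d - cf1 c * cf1 d - cf2 c * cf2 d.

Lemma vadd_efield al be c d u v :
  vadd (efield al be c u v) (efield al be d u v) = efield al be (cadd c d) u v.
Proof. fext. unfold vadd, efield, cadd; simpl; ring. Qed.
Lemma vsub_efield al be c d u v :
  vsub (efield al be c u v) (efield al be d u v) = efield al be (csub c d) u v.
Proof. fext. unfold vsub, efield, csub; simpl; ring. Qed.
Lemma vscal_efield al be r c u v : vscal r (efield al be c u v) = efield al be (cscale r c) u v.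
Proof. fext. unfold vscal, efield, cscale; simpl; ring. Qed.
Lemma vzero_efield al be u v : vzero = efield al be czero u v.
Proof. fext. unfold vzero, efield, czero; simpl; ring. Qed.
Lemma vopp_efield al be c u v : (fun i => - efield al be c u v i) = efield al be (cscale (-1) c) u v.
Proof. fext. unfold efield, cscale; simpl; ring. Qed.

(* The frame is orthonormal for <,> of signature (4,2), so the inner product
   of two fields of the family is the constant [coef_ip] of their coefficients. *)
Lemma ip_efield al be c d u v : ip62 (efield al be c u v) (efield al be d u v) = coef_ip c d.
Proof.
  assert (H1 := sin2_cos2 (al * u)). assert (H2 := sin2_cos2 v). assert (H3 := sin2_cos2 (be * u)).
  unfold Rsqr in *.
  transitivity ((ce1 c * ce1 d + ce2 c * ce2 d + ce3 c * ce3 d + ce4 c * ce4 d) *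
     ((sin (al*u) * sin (al*u) + cos (al*u) * cos (al*u)) * (sin v * sin v + cos v * cos v))
     - (cf1 c * cf1 d + cf2 c * cf2 d) * (sin (be*u) * sin (be*u) + cos (be*u) * cos (be*u))).
  - unfold ip62, efield, clifford_e1, clifford_e2, clifford_e3, clifford_e4, circle_f1, circle_f2;
      simpl; ring.
  - rewrite H1, H2, H3. unfold coef_ip; ring.
Qed.

Definition cefield al be (p q : coef) : CVF := fun u v => (efield al be p u v, efield al be q u v).

Lemma RF_efield al be c : RF (efield al be c) = cefield al be c czero.
Proof. fext. fext. unfold RF, of_real, cefield. f_equal. apply vzero_efield. Qed.
Lemma of_real_efield al be c u v : of_real (efield al be c u v) = cefield al be c czero u v.
Proof. unfold of_real, cefield. f_equal. apply vzero_efield. Qed.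
Lemma cvzero_cefield al be u v : cvzero = cefield al be czero czero u v.
Proof. unfold cvzero, cefield. rewrite <- vzero_efield. reflexivity. Qed.

Lemma dz_cefield al be p q : dz (cefield al be p q) =
  cefield al be (cscale (1/2) (cadd (coef_du al be p) (coef_dv q)))
                (cscale (1/2) (csub (coef_du al be q) (coef_dv p))).
Proof.
  unfold dz, cefield; simpl.
  change (fun u v => efield al be p u v) with (efield al be p).
  change (fun u v => efield al be q u v) with (efield al be q).
  rewrite !pu_efield, !pv_efield. fext. fext.
  rewrite vadd_efield, vsub_efield, !vscal_efield. reflexivity.
Qed.
Lemma dzb_cefield al be p q : dzb (cefield al be p q) =
  cefield al be (cscale (1/2) (csub (coef_du al be p) (coef_dv q)))
                (cscale (1/2) (cadd (coef_du al be q) (coef_dv p))).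
Proof.
  unfold dzb, cefield; simpl.
  change (fun u v => efield al be p u v) with (efield al be p).
  change (fun u v => efield al be q u v) with (efield al be q).
  rewrite !pu_efield, !pv_efield. fext. fext.
  rewrite vadd_efield, vsub_efield, !vscal_efield. reflexivity.
Qed.

Lemma cip_cefield al be p q r s u v :
  cip (cefield al be p q u v) (cefield al be r s u v)
  = (coef_ip p r - coef_ip q s, coef_ip p s + coef_ip q r).
Proof. unfold cip, cefield; simpl. rewrite !ip_efield. reflexivity. Qed.
Lemma cvscal_cefield al be a p q u v :
  cvscal a (cefield al be p q u v)
  = cefield al be (csub (cscale (fst a) p) (cscale (snd a) q))
                  (cadd (cscale (fst a) q) (cscale (snd a) p)) u v.
Proof.
  unfold cvscal, cefield; simpl.
  f_equal; fext; unfold efield, csub, cadd, cscale; simpl; ring.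
Qed.
Lemma cvadd_cefield al be p q r s u v :
  cvadd (cefield al be p q u v) (cefield al be r s u v) = cefield al be (cadd p r) (cadd q s) u v.
Proof. unfold cvadd, cefield; simpl. rewrite !vadd_efield. reflexivity. Qed.
Lemma cvsub_cefield al be p q r s u v :
  cvsub (cefield al be p q u v) (cefield al be r s u v) = cefield al be (csub p r) (csub q s) u v.
Proof. unfold cvsub, cefield; simpl. rewrite !vsub_efield. reflexivity. Qed.
Lemma cvconj_cefield al be p q u v :
  cvconj (cefield al be p q u v) = cefield al be p (cscale (-1) q) u v.
Proof. unfold cvconj, cefield; simpl. rewrite vopp_efield. reflexivity. Qed.
Lemma cveq_cefield al be p q r s u v :
  p = r -> q = s -> cveq (cefield al be p q u v) (cefield al be r s u v).
Proof. intros -> ->. split; intros i _; reflexivity. Qed.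

Ltac to_coef := repeat (first [
  match goal with |- context [pu (efield ?a ?b ?c)] => rewrite (pu_efield a b c) end
 |match goal with |- context [pv (efield ?a ?b ?c)] => rewrite (pv_efield a b c) end
 |match goal with |- context [RF (efield ?a ?b ?c)] => rewrite (RF_efield a b c) end
 |match goal with |- context [dz (cefield ?a ?b ?c ?d)] => rewrite (dz_cefield a b c d) end
 |match goal with |- context [dzb (cefield ?a ?b ?c ?d)] => rewrite (dzb_cefield a b c d) end
 |match goal with |- context [of_real (efield ?a ?b ?c ?u ?v)] =>
    rewrite (of_real_efield a b c u v) end
 |match goal with |- context [cvscal ?x (cefield ?a ?b ?c ?d ?u ?v)] =>
    rewrite (cvscal_cefield a b x c d u v) end
 |match goal with |- context [cvconj (cefield ?a ?b ?c ?d ?u ?v)] =>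
    rewrite (cvconj_cefield a b c d u v) end
 |match goal with |- context [cvadd (cefield ?a ?b ?c ?d ?u ?v) (cefield ?a ?b ?c' ?d' ?u ?v)] =>
    rewrite (cvadd_cefield a b c d c' d' u v) end
 |match goal with |- context [cvsub (cefield ?a ?b ?c ?d ?u ?v) (cefield ?a ?b ?c' ?d' ?u ?v)] =>
    rewrite (cvsub_cefield a b c d c' d' u v) end
 |match goal with |- context [cip (cefield ?a ?b ?c ?d ?u ?v) (cefield ?a ?b ?c' ?d' ?u ?v)] =>
    rewrite (cip_cefield a b c d c' d' u v) end
 |match goal with |- context [ip62 (efield ?a ?b ?c ?u ?v) (efield ?a ?b ?c' ?u ?v)] =>
    rewrite (ip_efield a b c c' u v) end
 ]).

Definition cY := Coef 1 0 0 0 1 0.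

Ltac coef_compute :=
  cbv beta iota zeta delta [coef_ip coef_du coef_dv cscale cadd csub czero cY ce1 ce2 ce3 ce4 cf1 cf2 fst snd].

(* Rational parametrization of the branch al > 0 of the hyperbola
   al^2 - be^2 = 1 by x = al + be > 0. *)
Definition hyp_al (x : R) := (x + / x) / 2.
Definition hyp_be (x : R) := (x - / x) / 2.

Ltac hyperbola_field := unfold hyp_al, hyp_be; field; auto.

Lemma ip_veq x x' y y' : veq x x' -> veq y y' -> ip62 x y = ip62 x' y'.
Proof.
  intros H1 H2. unfold ip62.
  rewrite (H1 0%nat), (H1 1%nat), (H1 2%nat), (H1 3%nat), (H1 4%nat), (H1 5%nat),
    (H2 0%nat), (H2 1%nat), (H2 2%nat), (H2 3%nat), (H2 4%nat), (H2 5%nat) by lia.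
  reflexivity.
Qed.
Lemma cip_cveq a a' b b' : cveq a a' -> cveq b b' -> cip a b = cip a' b'.
Proof.
  intros [H1 H2] [H3 H4]. unfold cip.
  rewrite (ip_veq _ _ _ _ H1 H3), (ip_veq _ _ _ _ H2 H4), (ip_veq _ _ _ _ H1 H4),
    (ip_veq _ _ _ _ H2 H3).
  reflexivity.
Qed.
Lemma cvconj_cveq a a' : cveq a a' -> cveq (cvconj a) (cvconj a').
Proof. intros [H1 H2]. split; auto. intros i Hi. simpl. rewrite H2; auto. Qed.
Lemma cveq_refl a : cveq a a.
Proof. split; intros i _; reflexivity. Qed.
Lemma cveq_trans a b c : cveq a b -> cveq b c -> cveq a c.
Proof. intros [H1 H2] [H3 H4]; split; intros i Hi; [rewrite H1, H3 | rewrite H2, H4]; auto. Qed.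

(* d/dzbar only sees the components 0..5, so it respects [cveq] pointwise. *)
Lemma dzb_cveq F G : (forall u v, cveq (F u v) (G u v)) ->
  forall u v, cveq (dzb F u v) (dzb G u v).
Proof.
  intros H u v.
  assert (Hu : forall i, (i < 6)%nat ->
    (fun s => fst (F s v) i) = (fun s => fst (G s v) i) /\
    (fun s => snd (F s v) i) = (fun s => snd (G s v) i)).
  { intros i Hi; split; fext; apply H; auto. }
  assert (Hv : forall i, (i < 6)%nat ->
    (fun s => fst (F u s) i) = (fun s => fst (G u s) i) /\
    (fun s => snd (F u s) i) = (fun s => snd (G u s) i)).
  { intros i Hi; split; fext; apply H; auto. }
  unfold dzb, pu, pv, vscal, vsub, vadd.
  split; intros i Hi; cbn [fst snd];
    destruct (Hu i Hi) as [Huf Hus]; destruct (Hv i Hi) as [Hvf Hvs];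
    rewrite ?Huf, ?Hus, ?Hvf, ?Hvs; reflexivity.
Qed.

Lemma cip_cvadd_l x y z :
  cip (cvadd x y) z = (fst (cip x z) + fst (cip y z), snd (cip x z) + snd (cip y z)).
Proof. destruct x, y, z. unfold cip, cvadd, ip62, vadd; simpl. f_equal; ring. Qed.
Lemma cip_cvsub_l x y z :
  cip (cvsub x y) z = (fst (cip x z) - fst (cip y z), snd (cip x z) - snd (cip y z)).
Proof. destruct x, y, z. unfold cip, cvsub, ip62, vsub; simpl. f_equal; ring. Qed.
Lemma cip_cvscal_l a x z : cip (cvscal a x) z = cmul a (cip x z).
Proof. destruct a, x, z. unfold cip, cvscal, cmul, ip62; simpl. f_equal; ring. Qed.
Lemma cip_cvzero_l z : cip cvzero z = (0, 0).
Proof. destruct z. unfold cip, cvzero, vzero, ip62; simpl. f_equal; ring. Qed.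

(* The conformal Hopf differential kappa = -(i al/2) e4 and the function
   s = be^2/2 of Y_zz = -(s/2) Y + kappa, together with
   D_zbar kappa = (al be^2/4) e2 + (al^2 be/4) f2 and
   D_zbar D_zbar kappa = (i al be^2/8) e4. *)
Definition kappa_field al be : CVF := cefield al be czero (Coef 0 0 0 (- al / 2) 0 0).
Definition s_field (be : R) : R -> R -> CR := fun _ _ => (be * be / 2, 0).
Definition Dkappa_field al be : CVF :=
  cefield al be (Coef 0 (al * be * be / 4) 0 0 0 (al * al * be / 4)) czero.
Definition DDkappa_field al be : CVF := cefield al be czero (Coef 0 0 0 (al * be * be / 8) 0 0).

(* The null vector N = (f1 - e1)/2 of V and the real null vectors
   L = r (e4 - nu2), R = -r (e4 + nu2) of V^perp, where nu2 = be e2 + al f2. *)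
Definition cN := Coef (- 1 / 2) 0 0 0 (1 / 2) 0.
Definition cL al be r := Coef 0 (- be * r) 0 r 0 (- al * r).
Definition cR al be r := Coef 0 (- be * r) 0 (- r) 0 (- al * r).

(* Two vectors spanning V^perp, used to test C-linear dependence. *)
Definition nu1 := Coef 0 0 0 1 0 0.
Definition nu2 al be := Coef 0 be 0 0 0 al.

Lemma cveq_solve al be P Q R S k u v :
  cveq (cefield al be P Q u v) (cvadd (cefield al be R S u v) k) ->
  cveq k (cefield al be (csub P R) (csub Q S) u v).
Proof.
  assert (Hs : forall P R i, efield al be (csub P R) u v i = efield al be P u v i - efield al be R u v i).
  { intros. unfold efield, csub; cbn [ce1 ce2 ce3 ce4 cf1 cf2]. ring. }
  intros [H1 H2]. unfold cefield, cvadd, vadd in *; cbn [fst snd] in *.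
  split; intros i Hi; cbn [fst snd]; rewrite Hs; [rewrite (H1 i Hi) | rewrite (H2 i Hi)]; ring.
Qed.

Lemma cmul_real_eq0 a c : c <> 0 -> cmul a (c, 0) = (0, 0) -> a = (0, 0).
Proof.
  destruct a as [a1 a2]. unfold cmul; cbn [fst snd]. intros Hc E. injection E; intros E2 E1.
  f_equal; apply (Rmult_eq_reg_r c); auto; lra.
Qed.
Lemma cmul_imag_eq0 a c : c <> 0 -> cmul a (0, c) = (0, 0) -> a = (0, 0).
Proof.
  destruct a as [a1 a2]. unfold cmul; cbn [fst snd]. intros Hc E. injection E; intros E2 E1.
  f_equal; apply (Rmult_eq_reg_r c); auto; lra.
Qed.

(* Riemann integrals of constants, in the sense of [is_RInt] and [is_RInt2];
   the Willmore density of our surfaces is constant. *)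
Lemma is_RInt_const f a b K : (forall y, f y = K) -> is_RInt f a b (K * (b - a)).
Proof.
  intro H. assert (E : f = fct_cte K) by (fext; apply H). subst f.
  exists (RiemannInt_P14 a b K). apply RiemannInt_P15.
Qed.
Lemma is_RInt_const_unique f a b K l : (forall y, f y = K) -> is_RInt f a b l -> l = K * (b - a).
Proof.
  intros H [pr <-]. assert (E : f = fct_cte K) by (fext; apply H). subst f. apply RiemannInt_P15.
Qed.
Lemma is_RInt2_const F a b c d K : (forall x y, F x y = K) ->
  is_RInt2 F a b c d (K * (d - c) * (b - a)).
Proof.
  intro H. exists (fun _ => K * (d - c)). split.
  - intros x _. apply is_RInt_const; auto.
  - apply is_RInt_const; auto.
Qed.
Lemma is_RInt2_const_unique F a b c d K l : a <= b -> (forall x y, F x y = K) ->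
  is_RInt2 F a b c d l -> l = K * (d - c) * (b - a).
Proof.
  intros Hab H [g [Hg [pr <-]]].
  rewrite (RiemannInt_P18 pr (RiemannInt_P14 a b (K * (d - c)))); auto.
  - apply RiemannInt_P15.
  - intros y Hy. unfold fct_cte.
    apply (is_RInt_const_unique (fun z => F y z) c d K); auto. apply Hg. lra.
Qed.

Lemma det_frame al be r u v :
  det6 (efield al be cY u v) (efield al be (coef_du al be cY) u v) (efield al be (coef_dv cY) u v)
       (efield al be cN u v) (efield al be (cR al be r) u v) (efield al be (cL al be r) u v) =
  2 * (al * al - be * be) * (r * r)
    * ((cos (al * u) ^ 2 + sin (al * u) ^ 2) * (cos v ^ 2 + sin v ^ 2)) ^ 2
    * (cos (be * u) ^ 2 + sin (be * u) ^ 2).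
Proof.
  unfold det6.
  cbv beta iota zeta delta [detn sumR Nat.ltb Nat.leb efield clifford_e1 clifford_e2 clifford_e3
    clifford_e4 circle_f1 circle_f2 cY coef_du coef_dv cN cL cR ce1 ce2 ce3 ce4 cf1 cf2].
  field.
Qed.

Section SurfaceGeometry.

Variable x : R.
Hypothesis Hx : x <> 0.
Local Notation al := (hyp_al x).
Local Notation be := (hyp_be x).
Local Notation Ysurf := (efield al be cY).

(* al = (x^2 + 1)/(2x) never vanishes. *)
Lemma hyp_al_neq0 : al <> 0.
Proof.
  unfold hyp_al. intro H.
  assert (E : x * x + 1 = 0).
  { replace (x * x + 1) with (2 * x * ((x + / x) / 2)) by (field; auto). rewrite H; ring. }
  nra.
Qed.

Lemma canonical_Y : canonical_lift Ysurf.
Proof.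
  assert (Hc : forall u v, cip (dz (RF Ysurf) u v) (dzb (RF Ysurf) u v) = (1/2, 0)).
  { intros u v. to_coef. coef_compute. f_equal; hyperbola_field. }
  split; [split|]; auto.
  - apply smooth_efield.
  - intros u v. rewrite Hc. cbn [fst snd]. split; [|split; [|split; [|split]]]; try lra.
    + (* the circle component (cos (be u), sin (be u)) never vanishes *)
      destruct (Req_dec (cos (be * u)) 0) as [H|H].
      * exists 5%nat. split; [lia|].
        unfold efield, clifford_e1, clifford_e2, clifford_e3, clifford_e4, circle_f1, circle_f2, cY;
          simpl.
        intro H'. assert (H2 := sin2_cos2 (be * u)). unfold Rsqr in H2. rewrite H in H2. nra.
      * exists 4%nat. split; [lia|].
        unfold efield, clifford_e1, clifford_e2, clifford_e3, clifford_e4, circle_f1, circle_f2, cY;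
          simpl.
        intro H'. apply H. lra.
    + to_coef. coef_compute. ring.
    + to_coef. coef_compute. f_equal; hyperbola_field.
Qed.

Lemma hopf_Y : hopf Ysurf (kappa_field al be) (s_field be).
Proof.
  split; [apply canonical_Y | split; [split; apply smooth_efield |]].
  intros u v. unfold kappa_field, s_field, cmul; cbn [fst snd]. split.
  - split; [|split; [|split]]; to_coef; coef_compute; f_equal; hyperbola_field.
  - to_coef. apply cveq_cefield; coef_compute; f_equal; hyperbola_field.
Qed.

(* The Hopf differential is determined by Y: pairing Y_zz = -(s/2) Y + kappa
   with Y_{z zbar} (orthogonal to kappa) fixes s, and then kappa. *)
Lemma hopf_unique kp s : hopf Ysurf kp s ->
  forall u v, s u v = s_field be u v /\ cveq (kp u v) (kappa_field al be u v).
Proof.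
  intros [_ [_ H]] u v. destruct (H u v) as [[_ [_ [_ Hperp]]] Heq].
  pose proof (cip_cveq _ _ _ _ Heq (cveq_refl (dzb (dz (RF Ysurf)) u v))) as E.
  rewrite cip_cvadd_l, cip_cvscal_l, Hperp in E.
  assert (Yzz : cip (dz (dz (RF Ysurf)) u v) (dzb (dz (RF Ysurf)) u v) = (be * be / 8, 0))
    by (to_coef; coef_compute; f_equal; hyperbola_field).
  assert (Y0 : cip (of_real (Ysurf u v)) (dzb (dz (RF Ysurf)) u v) = (-1/2, 0))
    by (to_coef; coef_compute; f_equal; hyperbola_field).
  rewrite Yzz, Y0 in E.
  destruct (s u v) as [s1 s2] eqn:Es.
  unfold cmul in E; cbn [fst snd] in E. injection E. intros E2 E1.
  assert (Hs1 : s1 = be * be / 2) by lra. assert (Hs2 : s2 = 0) by lra.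
  subst s1 s2. split; [reflexivity|].
  revert Heq. unfold cmul; cbn [fst snd]. to_coef. intro Heq.
  apply cveq_solve in Heq. eapply cveq_trans; [exact Heq|].
  unfold kappa_field. apply cveq_cefield; coef_compute; f_equal; hyperbola_field.
Qed.

Lemma willmore_Y : Willmore Ysurf.
Proof.
  exists (kappa_field al be), (s_field be), (Dkappa_field al be), (DDkappa_field al be).
  split; [apply hopf_Y | split; [split; apply smooth_efield | split; [|split]]].
  - intros u v. unfold kappa_field, Dkappa_field. split.
    + split; [|split; [|split]]; to_coef; coef_compute; f_equal; hyperbola_field.
    + exists (0,0), (- (al * al / 4), 0), (0, al * al / 4), (0,0).
      to_coef. apply cveq_cefield; coef_compute; f_equal; hyperbola_field.
  - intros u v. unfold Dkappa_field, DDkappa_field. split.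
    + split; [|split; [|split]]; to_coef; coef_compute; f_equal; hyperbola_field.
    + exists (- (al * al * be * be / 8), 0), (0, 0), (0, 0), (0,0).
      to_coef. apply cveq_cefield; coef_compute; f_equal; hyperbola_field.
  - intros u v. unfold DDkappa_field, kappa_field, s_field, cmul, cconj; cbn [fst snd].
    rewrite (cvzero_cefield al be u v). to_coef. apply cveq_cefield; coef_compute; f_equal;
      hyperbola_field.
Qed.

(* nu1, nu2 lie in V^perp, so they are orthogonal to every vector of V. *)
Lemma inV_orthogonal_nu w u v Z : inV Ysurf u v w ->
  (Z = nu1 \/ Z = nu2 al be) -> cip w (cefield al be Z czero u v) = (0, 0).
Proof.
  intros [a [b [c [d Hw]]]] HZ. rewrite (cip_cveq _ _ _ _ Hw (cveq_refl _)).
  rewrite !cip_cvadd_l, !cip_cvscal_l.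
  destruct HZ as [-> | ->]; unfold nu1, nu2; to_coef; coef_compute; unfold cmul; cbn [fst snd];
    f_equal; hyperbola_field.
Qed.

(* Any D_zbar kappa has the components (0, -al be/4) on (nu1, nu2): it differs
   from (kappa_field)_zbar by a vector of V. *)
Lemma Dzb_kappa_pairings kp s eta u v : hopf Ysurf kp s -> Dzb Ysurf kp eta ->
  cip (eta u v) (cefield al be nu1 czero u v) = (0, 0) /\
  cip (eta u v) (cefield al be (nu2 al be) czero u v) = (- (al * be / 4), 0).
Proof.
  intros Hh HD.
  assert (Hkp : forall u v, cveq (kp u v) (kappa_field al be u v))
    by (intros; apply (hopf_unique kp s Hh)).
  assert (Hpair : forall Z, (Z = nu1 \/ Z = nu2 al be) ->
    cip (eta u v) (cefield al be Z czero u v)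
    = cip (dzb (kappa_field al be) u v) (cefield al be Z czero u v)).
  { intros Z HZ. destruct (HD u v) as [_ HV].
    pose proof (inV_orthogonal_nu _ u v Z HV HZ) as H0. rewrite cip_cvsub_l in H0.
    rewrite (cip_cveq _ _ _ _ (dzb_cveq _ _ Hkp u v) (cveq_refl _)) in H0.
    destruct (cip (dzb (kappa_field al be) u v) (cefield al be Z czero u v)) as [p1 p2].
    destruct (cip (eta u v) (cefield al be Z czero u v)) as [q1 q2].
    cbn [fst snd] in H0. injection H0; intros. f_equal; lra. }
  rewrite !Hpair by auto. unfold kappa_field, nu1, nu2.
  to_coef. coef_compute. split; f_equal; hyperbola_field.
Qed.

Lemma kappa_pairings kp s u v : hopf Ysurf kp s ->
  cip (kp u v) (cefield al be nu1 czero u v) = (0, - (al / 2)) /\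
  cip (kp u v) (cefield al be (nu2 al be) czero u v) = (0, 0).
Proof.
  intro Hh. destruct (hopf_unique kp s Hh u v) as [_ Hk].
  rewrite !(cip_cveq _ _ _ _ Hk (cveq_refl _)). unfold kappa_field, nu1, nu2.
  to_coef. coef_compute. split; f_equal; hyperbola_field.
Qed.

(* Y is not S-Willmore: comparing the components on nu1 and nu2 shows that
   D_zbar kappa and kappa are C-linearly independent (when be <> 0). *)
Lemma not_SWillmore_Y : be <> 0 -> ~ SWillmore Ysurf.
Proof.
  intros Hbe [_ [kp [s [eta [Hh [HD Hpar]]]]]].
  destruct (Hpar 0 0) as [a [b [Hne Hz]]].
  destruct (Dzb_kappa_pairings kp s eta 0 0 Hh HD) as [E1 E2].
  destruct (kappa_pairings kp s 0 0 Hh) as [K1 K2].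
  pose proof (cip_cveq _ _ _ _ Hz (cveq_refl (cefield al be nu1 czero 0 0))) as P1.
  pose proof (cip_cveq _ _ _ _ Hz (cveq_refl (cefield al be (nu2 al be) czero 0 0))) as P2.
  rewrite cip_cvzero_l, cip_cvadd_l, !cip_cvscal_l in P1, P2.
  rewrite E1, K1 in P1. rewrite E2, K2 in P2.
  assert (Hal := hyp_al_neq0).
  assert (Hb : b = (0, 0)).
  { apply (cmul_imag_eq0 b (- (al / 2))); [lra|].
    revert P1. destruct a, b. unfold cmul; cbn [fst snd]. intro P1. injection P1; intros.
    f_equal; lra. }
  assert (Ha : a = (0, 0)).
  { apply (cmul_real_eq0 a (- (al * be / 4))).
    - intro H. apply Hal. apply (Rmult_eq_reg_r be); [|auto]. lra.
    - revert P2. destruct a, b. unfold cmul; cbn [fst snd]. intro P2. injection P2; intros.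
      f_equal; lra. }
  subst a b. apply Hne. reflexivity.
Qed.

Lemma frame_Y r : r * r = / 2 ->
  frame Ysurf (efield al be cN) (efield al be (cL al be r)) (efield al be (cR al be r)).
Proof.
  intros Hr u v. split; [|split; [|split; [|split; [|split; [|split; [|split; [|split; [|split]]]]]]]].
  - exists ((1 + be * be) / 2, 0), (0, 0), (0, 0), (2, 0).
    to_coef. apply cveq_cefield; unfold cN; coef_compute; f_equal; hyperbola_field.
  - to_coef. unfold cN; coef_compute; f_equal; hyperbola_field.
  - to_coef. unfold cN; coef_compute; hyperbola_field.
  - to_coef. unfold cN; coef_compute; hyperbola_field.
  - split; [|split; [|split]]; to_coef; unfold cL; coef_compute; f_equal; hyperbola_field.
  - split; [|split; [|split]]; to_coef; unfold cR; coef_compute; f_equal; hyperbola_field.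
  - to_coef. unfold cL; coef_compute. transitivity (0 * (r * r)); [hyperbola_field | ring].
  - to_coef. unfold cR; coef_compute. transitivity (0 * (r * r)); [hyperbola_field | ring].
  - to_coef. unfold cL, cR; coef_compute.
    transitivity (-2 * (r * r)); [hyperbola_field | rewrite Hr; field].
  - rewrite pu_efield, pv_efield, det_frame.
    assert (H1 := sin2_cos2 (al * u)). assert (H2 := sin2_cos2 v).
    assert (H3 := sin2_cos2 (be * u)). unfold Rsqr in *. simpl. rewrite !Rmult_1_r.
    rewrite (Rplus_comm (cos (al * u) * _)), (Rplus_comm (cos v * _)),
      (Rplus_comm (cos (be * u) * _)).
    rewrite H1, H2, H3, Hr.
    replace (al * al - be * be) with 1 by hyperbola_field. lra.
Qed.

Lemma kappa_in_frame u v :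
  cveq (kappa_field al be u v)
    (cvscal (0, - (al / (2 * sqrt 2)))
       (of_real (vsub (efield al be (cL al be (/ sqrt 2)) u v) (efield al be (cR al be (/ sqrt 2)) u v)))).
Proof.
  assert (Hs2 : sqrt 2 * sqrt 2 = 2) by (apply sqrt_sqrt; lra).
  assert (Hs0 : 0 < sqrt 2) by (apply sqrt_lt_R0; lra).
  unfold kappa_field. rewrite vsub_efield, of_real_efield, cvscal_cefield.
  apply cveq_cefield; unfold cL, cR; coef_compute; f_equal; try ring.
  transitivity (- al / (sqrt 2 * sqrt 2)); [rewrite Hs2; field | field; lra].
Qed.

Lemma density_Y kp s : hopf Ysurf kp s ->
  forall u v, fst (cip (kp u v) (cvconj (kp u v))) = al * al / 4.
Proof.
  intros H u v. pose proof (proj2 (hopf_unique kp s H u v)) as K.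
  rewrite (cip_cveq _ _ _ _ K (cvconj_cveq _ _ K)). unfold kappa_field. to_coef. coef_compute. field.
Qed.

Lemma Wval_Y T1 T2 : Wval Ysurf T1 T2 (al * al / 4 * (T2 - 0) * (T1 - 0)).
Proof.
  exists (kappa_field al be), (s_field be). split; [apply hopf_Y|].
  apply is_RInt2_const. intros u v. apply (density_Y _ _ hopf_Y).
Qed.
Lemma Wval_Y_unique T1 T2 w : 0 <= T1 -> Wval Ysurf T1 T2 w ->
  w = al * al / 4 * (T2 - 0) * (T1 - 0).
Proof.
  intros H1 [kp [s [Hh HI]]]. eapply is_RInt2_const_unique; eauto.
  intros u v. apply (density_Y _ _ Hh).
Qed.

End SurfaceGeometry.

Lemma Yt_efield t : Yt t = efield (t / sqrt (t ^ 2 - 1)) (1 / sqrt (t ^ 2 - 1)) cY.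
Proof.
  fext. fext. fext. rename x into u, x0 into v, x1 into i.
  unfold Yt, efield, clifford_e1, clifford_e2, clifford_e3, clifford_e4, circle_f1, circle_f2, cY;
    cbn [ce1 ce2 ce3 ce4 cf1 cf2].
  replace (t * u / sqrt (t ^ 2 - 1)) with (t / sqrt (t ^ 2 - 1) * u) by (unfold Rdiv; ring).
  replace (u / sqrt (t ^ 2 - 1)) with (1 / sqrt (t ^ 2 - 1) * u) by (unfold Rdiv; ring).
  destruct6 i; ring.
Qed.

(* The point x = al + be of the hyperbola corresponding to Y_t. *)
Definition Yt_parameter (t : R) := (t + 1) / sqrt (t ^ 2 - 1).

Lemma Yt_parameter_spec t : 1 < t ->
  0 < Yt_parameter t /\
  hyp_al (Yt_parameter t) = t / sqrt (t ^ 2 - 1) /\ hyp_be (Yt_parameter t) = 1 / sqrt (t ^ 2 - 1).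
Proof.
  intro Ht. unfold Yt_parameter.
  set (S := sqrt (t ^ 2 - 1)). assert (HS : 0 < S) by (apply sqrt_lt_R0; nra).
  assert (HS2 : S * S = t ^ 2 - 1) by (apply sqrt_sqrt; nra).
  assert (Hinv : / ((t + 1) / S) = (t - 1) / S).
  { field_simplify_eq; [| split; lra]. replace (S ^ 2) with (S * S) by ring. rewrite HS2. ring. }
  unfold hyp_al, hyp_be. rewrite Hinv.
  split; [apply Rdiv_lt_0_compat; lra | split; field; lra].
Qed.

Lemma Yt_as_efield t : 1 < t ->
  Yt t = efield (hyp_al (Yt_parameter t)) (hyp_be (Yt_parameter t)) cY.
Proof. intro Ht. destruct (Yt_parameter_spec t Ht) as [_ [-> ->]]. apply Yt_efield. Qed.

Lemma Yt_geometry t : 1 < t ->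
  canonical_lift (Yt t) /\ Willmore (Yt t) /\ ~ SWillmore (Yt t) /\
  exists kappa s, hopf (Yt t) kappa s /\
    exists N L Rr, frame (Yt t) N L Rr /\
      forall u v, cveq (kappa u v)
        (cvscal (0, - (t / (2 * sqrt 2 * sqrt (t ^ 2 - 1))))
                (of_real (vsub (L u v) (Rr u v)))).
Proof.
  intro Ht. destruct (Yt_parameter_spec t Ht) as [Hx [Hal Hbe]].
  set (x := Yt_parameter t) in *. assert (Hx0 : x <> 0) by lra.
  assert (HS : 0 < sqrt (t ^ 2 - 1)) by (apply sqrt_lt_R0; nra).
  assert (Hbe0 : hyp_be x <> 0) by (rewrite Hbe; apply Rgt_not_eq, Rdiv_lt_0_compat; lra).
  assert (Hs2 : sqrt 2 * sqrt 2 = 2) by (apply sqrt_sqrt; lra).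
  assert (Hs0 : 0 < sqrt 2) by (apply sqrt_lt_R0; lra).
  rewrite (Yt_as_efield t Ht). fold x.
  split; [apply canonical_Y; auto |].
  split; [apply willmore_Y; auto |].
  split; [apply not_SWillmore_Y; auto |].
  exists (kappa_field (hyp_al x) (hyp_be x)), (s_field (hyp_be x)). split; [apply hopf_Y; auto |].
  exists (efield (hyp_al x) (hyp_be x) cN),
    (efield (hyp_al x) (hyp_be x) (cL (hyp_al x) (hyp_be x) (/ sqrt 2))),
    (efield (hyp_al x) (hyp_be x) (cR (hyp_al x) (hyp_be x) (/ sqrt 2))).
  split.
  - apply frame_Y; auto. rewrite <- Rinv_mult, Hs2. reflexivity.
  - intros u v.
    replace (t / (2 * sqrt 2 * sqrt (t ^ 2 - 1))) with (hyp_al x / (2 * sqrt 2))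
      by (rewrite Hal; field; lra).
    apply kappa_in_frame.
Qed.

Lemma Wval_Yt t T1 T2 : 1 < t ->
  Wval (Yt t) T1 T2 (t / sqrt (t ^ 2 - 1) * (t / sqrt (t ^ 2 - 1)) / 4 * (T2 - 0) * (T1 - 0)).
Proof.
  intro Ht. destruct (Yt_parameter_spec t Ht) as [Hx [Hal _]].
  rewrite (Yt_as_efield t Ht), <- Hal. apply Wval_Y. lra.
Qed.
Lemma Wval_Yt_unique t T1 T2 w : 1 < t -> 0 <= T1 -> Wval (Yt t) T1 T2 w ->
  w = t / sqrt (t ^ 2 - 1) * (t / sqrt (t ^ 2 - 1)) / 4 * (T2 - 0) * (T1 - 0).
Proof.
  intro Ht. destruct (Yt_parameter_spec t Ht) as [Hx [Hal _]].
  rewrite (Yt_as_efield t Ht), <- Hal. apply Wval_Y_unique. lra.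
Qed.

Lemma admissible_real p q : admissible p q -> 1 <= INR q /\ INR q + 1 <= INR p.
Proof.
  intros [H1 [H2 _]]. split.
  - apply (le_INR 1 q) in H1. simpl in H1. lra.
  - apply le_INR in H2. rewrite S_INR in H2. lra.
Qed.

Lemma admissible_t_gt1 p q : admissible p q -> 1 < INR p / INR q.
Proof.
  intro Ha. destruct (admissible_real p q Ha) as [H1 H2].
  apply (Rmult_lt_reg_r (INR q)); [lra|]. unfold Rdiv. rewrite Rmult_assoc, Rinv_l; lra.
Qed.

Lemma sqrt_ratio_sq_minus_1 p q : 0 < q -> q < p -> sqrt ((p / q) ^ 2 - 1) = sqrt (p ^ 2 - q ^ 2) / q.
Proof.
  intros Hq Hp. assert (H0 : 0 < p ^ 2 - q ^ 2) by nra.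
  assert (Hs0 : 0 < sqrt (p ^ 2 - q ^ 2)) by (apply sqrt_lt_R0; lra).
  rewrite <- (sqrt_pow2 (sqrt (p ^ 2 - q ^ 2) / q)) by (apply Rlt_le, Rdiv_lt_0_compat; lra).
  f_equal. field_simplify; try lra.
  replace (sqrt (p ^ 2 - q ^ 2) ^ 2) with (p ^ 2 - q ^ 2) by (symmetry; apply pow2_sqrt; lra).
  reflexivity.
Qed.

(* The lattice generated by (2 pi q S, 0) and (0, 2 pi) leaves Y_t invariant:
   the angles t u/S, u/S and v advance by 2 pi p, 2 pi q and 2 pi. *)
Lemma Yt_periodic p q : admissible p q ->
  let t := INR p / INR q in periodic (Yt t) (2 * PI * INR q * sqrt (t ^ 2 - 1)) (2 * PI).
Proof.
  intros Ha t. pose proof (admissible_t_gt1 p q Ha) as Ht. fold t in Ht.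
  destruct (admissible_real p q Ha) as [H1 H2].
  assert (HS : 0 < sqrt (t ^ 2 - 1)) by (apply sqrt_lt_R0; nra).
  assert (Htq : t * INR q = INR p) by (unfold t; field; lra).
  intros u v. split; intros i Hi; unfold Yt; cbv zeta.
  - replace (t * (u + 2 * PI * INR q * sqrt (t ^ 2 - 1)) / sqrt (t ^ 2 - 1))
      with (t * u / sqrt (t ^ 2 - 1) + 2 * INR p * PI) by (rewrite <- Htq; field; lra).
    replace ((u + 2 * PI * INR q * sqrt (t ^ 2 - 1)) / sqrt (t ^ 2 - 1))
      with (u / sqrt (t ^ 2 - 1) + 2 * INR q * PI) by (field; lra).
    rewrite !cos_period, !sin_period. reflexivity.
  - replace (v + 2 * PI) with (v + 2 * INR 1 * PI) by (simpl; ring).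
    rewrite !cos_period, !sin_period. reflexivity.
Qed.

Lemma W_torus_value p q : admissible p q ->
  let t := INR p / INR q in
  t / sqrt (t ^ 2 - 1) * (t / sqrt (t ^ 2 - 1)) / 4 * (2 * PI - 0)
    * (2 * PI * INR q * sqrt (t ^ 2 - 1) - 0)
  = INR p ^ 2 / sqrt (INR p ^ 2 - INR q ^ 2) * PI ^ 2.
Proof.
  intros Ha t. destruct (admissible_real p q Ha) as [H1 H2]. unfold t.
  rewrite sqrt_ratio_sq_minus_1 by lra.
  assert (Hs0 : 0 < sqrt (INR p ^ 2 - INR q ^ 2)) by (apply sqrt_lt_R0; nra).
  field. lra.
Qed.

Lemma Yt_torus p q : admissible p q ->
  let t := INR p / INR q in
  periodic (Yt t) (2 * PI * INR q * sqrt (t ^ 2 - 1)) (2 * PI) /\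
  Wval (Yt t) (2 * PI * INR q * sqrt (t ^ 2 - 1)) (2 * PI)
       (INR p ^ 2 / sqrt (INR p ^ 2 - INR q ^ 2) * PI ^ 2).
Proof.
  intros Ha t. split; [apply Yt_periodic; auto |].
  rewrite <- (W_torus_value p q Ha). apply Wval_Yt, admissible_t_gt1; auto.
Qed.

(* For integers 1 <= Q < P: P^2/sqrt(P^2-Q^2) >= 4/sqrt 3, since
   16 (P^2 - Q^2) <= 16 (P^2 - 1) <= 3 P^4 when P >= 2. *)
Lemma willmore_bound P Q : 1 <= Q -> Q + 1 <= P -> 4 / sqrt 3 <= P ^ 2 / sqrt (P ^ 2 - Q ^ 2).
Proof.
  intros H1 H2.
  assert (Hy : 0 < P ^ 2 - Q ^ 2) by nra.
  assert (s3p : 0 < sqrt 3) by (apply sqrt_lt_R0; lra).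
  assert (syp : 0 < sqrt (P ^ 2 - Q ^ 2)) by (apply sqrt_lt_R0; lra).
  assert (s3s : sqrt 3 * sqrt 3 = 3) by (apply sqrt_sqrt; lra).
  assert (sys : sqrt (P ^ 2 - Q ^ 2) * sqrt (P ^ 2 - Q ^ 2) = P ^ 2 - Q ^ 2) by (apply sqrt_sqrt; lra).
  set (s3 := sqrt 3) in *. set (sy := sqrt (P ^ 2 - Q ^ 2)) in *.
  assert (P2 : 4 <= P ^ 2) by (simpl; nra). assert (Q2 : 1 <= Q ^ 2) by (simpl; nra).
  assert (K0 : 0 <= (3 * P ^ 2 - 4) * (P ^ 2 - 4)) by (apply Rmult_le_pos; lra).
  assert (K : 16 * (P ^ 2 - Q ^ 2) <= 3 * (P ^ 2 * P ^ 2)) by nra.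
  assert (K2 : 4 * sy <= P ^ 2 * s3).
  { apply Rsqr_incr_0_var; [|nra]. unfold Rsqr.
    replace (4 * sy * (4 * sy)) with (16 * (sy * sy)) by ring.
    replace (P ^ 2 * s3 * (P ^ 2 * s3)) with (3 * (P ^ 2 * P ^ 2)) by (rewrite <- s3s; ring).
    rewrite sys. exact K. }
  apply (Rmult_le_reg_r (s3 * sy)); [nra|].
  replace (4 / s3 * (s3 * sy)) with (4 * sy) by (field; lra).
  replace (P ^ 2 / sy * (s3 * sy)) with (P ^ 2 * s3) by (field; lra). exact K2.
Qed.

Lemma Yt_torus_W_lower_bound p q : admissible p q ->
  forall w, Wval (Yt (INR p / INR q)) (2 * PI * INR q * sqrt ((INR p / INR q) ^ 2 - 1)) (2 * PI) w ->
    4 / sqrt 3 * PI ^ 2 <= w.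
Proof.
  intros Ha w HW. pose proof (admissible_t_gt1 p q Ha) as Ht.
  destruct (admissible_real p q Ha) as [H1 H2]. pose proof PI_RGT_0.
  apply Wval_Yt_unique in HW; auto.
  - rewrite HW, (W_torus_value p q Ha). apply Rmult_le_compat_r.
    + apply pow_le. lra.
    + apply willmore_bound; auto.
  - assert (0 <= sqrt ((INR p / INR q) ^ 2 - 1)) by apply sqrt_pos.
    apply Rmult_le_pos; auto. nra.
Qed.

Lemma Yt_torus_W_minimum : exists p q : nat, admissible p q /\
  Wval (Yt (INR p / INR q)) (2 * PI * INR q * sqrt ((INR p / INR q) ^ 2 - 1)) (2 * PI)
       (4 / sqrt 3 * PI ^ 2).
Proof.
  assert (Ha : admissible 2 1) by (unfold admissible; repeat split; auto).
  exists 2%nat, 1%nat. split; auto.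
  replace (4 / sqrt 3 * PI ^ 2) with (INR 2 ^ 2 / sqrt (INR 2 ^ 2 - INR 1 ^ 2) * PI ^ 2).
  - apply (Yt_torus 2 1 Ha).
  - simpl. replace ((1 + 1) * ((1 + 1) * 1) - 1 * (1 * 1)) with 3 by ring. field.
    apply Rgt_not_eq, sqrt_lt_R0. lra.
Qed.

Theorem mainTheorem12 :
  (forall t : R, 1 < t ->
     canonical_lift (Yt t) /\ Willmore (Yt t) /\ ~ SWillmore (Yt t) /\
     exists kappa s, hopf (Yt t) kappa s /\
       exists N L Rr, frame (Yt t) N L Rr /\
         forall u v, cveq (kappa u v)
           (cvscal (0, - (t / (2 * sqrt 2 * sqrt (t ^ 2 - 1))))
                   (of_real (vsub (L u v) (Rr u v))))) /\
  (forall p q : nat, admissible p q ->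
     let t := INR p / INR q in
     periodic (Yt t) (2 * PI * INR q * sqrt (t ^ 2 - 1)) (2 * PI) /\
     Wval (Yt t) (2 * PI * INR q * sqrt (t ^ 2 - 1)) (2 * PI)
          (INR p ^ 2 / sqrt (INR p ^ 2 - INR q ^ 2) * PI ^ 2)) /\
  (forall p q : nat, admissible p q ->
     forall w, Wval (Yt (INR p / INR q)) (2 * PI * INR q * sqrt ((INR p / INR q) ^ 2 - 1))
                    (2 * PI) w ->
       4 / sqrt 3 * PI ^ 2 <= w) /\
  (exists p q : nat, admissible p q /\
     Wval (Yt (INR p / INR q)) (2 * PI * INR q * sqrt ((INR p / INR q) ^ 2 - 1))
          (2 * PI) (4 / sqrt 3 * PI ^ 2)).
Proof.
  split; [exact Yt_geometry |].
  split; [exact Yt_torus |].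
  split; [exact Yt_torus_W_lower_bound | exact Yt_torus_W_minimum].
Qed.
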